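(* Let $G=(V,E)$ be a multigraph with $|V|=s\ge 2$ and $|E|=m$. For every integer $g\ge 1$ satisfying $m\ge 2s+g+1$, there exists a subset of vertices $S\subseteq V$ with $|S|\le 8g\log(s)$ that spans at least $|S|+g$ edges.
   Context: A multigraph is a graph that may contain parallel edges and (possibly parallel) self-loops; edges are counted with multiplicity. A set of vertices $S$ spans an edge if all endpoints of the edge lie in $S$ (a self-loop at $v$ is spanned iff $v\in S$). Logarithms are base 2. *)

From mathcomp Require Import all_boot.
From Stdlib Require Import Reals.
Set Implicit Arguments. Unset Strict Implicit. Unset Printing Implicit Defensive.

(* A multigraph on the finite vertex type V: a finite type E of edges (edges
   are counted with multiplicity since distinct elements of E may have the
   same endpoints), each edge e having endpoints (ends e).1 and (ends e).2;
   a self-loop is an edge with equal endpoints. *)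

Definition spanned (V E : finType) (ends : E -> V * V) (S : {set V}) : {set E} :=
  [set e | ((ends e).1 \in S) && ((ends e).2 \in S)].

Definition log2 (x : R) : R := (ln x / ln 2)%R.

From mathcomp Require Import all_boot.
From Stdlib Require Import Reals Lra.
From mathcomp Require Import zify.

(* The case g = 1 is by induction on the number of vertices.  A vertex of
   degree at most 2 can be deleted, and at most 8 vertices can all be taken.
   When every degree is at least 3, grow breadth-first balls around a vertex
   together with their BFS trees: a ball spanning no more edges than vertices
   has at least twice as many vertices in its neighbourhood (degree counting),
   so the radius r at which a ball first spans more edges than vertices
   satisfies 2^(r-1) <= |V|; two non-tree edges of that ball, with the tree
   paths to their at most four endpoints, give at most 1 + 4r vertices
   spanning one edge more than vertices.
   For larger g, contract such a dense set C to a single vertex and delete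
   |C| of its edges; this keeps |E| - 2|V| large enough for g - 1, and a
   solution in the contracted graph lifts back, gaining one surplus edge. *)

Lemma ln2_gt0 : (0 < ln 2)%R.
Proof. have := ln_lt_2; lra. Qed.

Lemma log2_le (x y : R) : (0 < x)%R -> (x <= y)%R -> (log2 x <= log2 y)%R.
Proof.
move=> x_gt0 /Rle_lt_or_eq_dec [xy|->]; last exact: Rle_refl.
apply: Rmult_le_compat_r; first exact/Rlt_le/Rinv_0_lt_compat/ln2_gt0.
exact/Rlt_le/ln_increasing.
Qed.

Lemma log2_INR_le (m n : nat) : 0 < m -> m <= n -> (log2 (INR m) <= log2 (INR n))%R.
Proof. by move=> /ltP/lt_0_INR m_gt0 /leP/le_INR; apply: log2_le. Qed.

Lemma INR_expn2 (r : nat) : INR (expn 2 r) = (2 ^ r)%R.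
Proof. by elim: r => [|r IHr] //=; rewrite expnS mult_INR IHr /=; lra. Qed.

Lemma expn2_le_log2 [r n : nat] : expn 2 r <= n -> (INR r <= log2 (INR n))%R.
Proof.
move=> le_2r_n; have -> : INR r = log2 (INR (expn 2 r)).
  rewrite /log2 INR_expn2 ln_pow; last exact: Rlt_0_2.
  by have := ln2_gt0; rewrite /Rdiv Rmult_assoc => ?; rewrite Rinv_r; lra.
by apply: log2_INR_le; rewrite ?expn_gt0.
Qed.

Lemma log2_ge1 [n : nat] : 2 <= n -> (1 <= log2 (INR n))%R.
Proof. by move=> n_ge2; have := @expn2_le_log2 1 n; rewrite expn1; apply. Qed.

Lemma bfs_bound_log2 (c k n : nat) :
  c <= 1 + k * 4 -> expn 2 k.-1 <= n -> 4 <= n -> (INR c <= 8 * log2 (INR n))%R.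
Proof.
move=> le_c le_2k_n ge4n.
have log2n_ge2 : (2 <= log2 (INR n))%R by have := @expn2_le_log2 2 n; rewrite INR_IZR_INZ; apply.
have le_k : (INR k <= INR k.-1 + 1)%R by case: (k) => [|j]; rewrite ?S_INR /=; lra.
have /le_INR := leP le_c; have := expn2_le_log2 le_2k_n.
have INR4 : INR 4 = 4%R by rewrite /=; lra.
rewrite plus_INR mult_INR INR4 INR_1; lra.
Qed.

Lemma exists_subset_card [T : finType] [A : {set T}] [k : nat] :
  k <= #|A| -> exists2 D : {set T}, D \subset A & #|D| = k.
Proof.
elim: k => [|k IHk] le_kA; first by exists set0; rewrite ?sub0set ?cards0.
have [D sDA cardD] := IHk (ltnW le_kA).
have /card_gt0P [x] : 0 < #|A :\: D| by rewrite cardsD (setIidPr sDA) cardD subn_gt0.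
rewrite inE => /andP [xD xA].
by exists (x |: D); rewrite ?subUset ?sub1set ?xA ?sDA // cardsU1 xD cardD.
Qed.

Lemma sum_card_fibers (I J : finType) (f : I -> J) (A : {set I}) (B : {set J}) :
  \sum_(u in B) #|[set e in A | f e == u]| = #|[set e in A | f e \in B]|.
Proof.
rewrite -sum1_card (partition_big f (mem B)) => [|e]; last by rewrite inE => /andP [].
apply: eq_bigr => u uB; rewrite -sum1_card; apply: eq_bigl => e.
by rewrite !inE; case: eqP => [->|]; rewrite ?uB ?andbT ?andbF.
Qed.

Section Spanned.
Variables (V E : finType) (ends : E -> V * V).

Lemma spannedS [S S' : {set V}] : S \subset S' -> spanned ends S \subset spanned ends S'.
Proof.
move/subsetP=> sSS'; apply/subsetP => e; rewrite !inE => /andP [e1 e2].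
by rewrite !sSS'.
Qed.

(* The endpoint of [e] in [B] and the other one (meaningful when [e] has an
   endpoint in [B]). *)
Definition near_end (B : {set V}) (e : E) : V :=
  if (ends e).1 \in B then (ends e).1 else (ends e).2.
Definition far_end (B : {set V}) (e : E) : V :=
  if (ends e).1 \in B then (ends e).2 else (ends e).1.

Lemma spanned_near_far (B P : {set V}) (e : E) :
  near_end B e \in P -> far_end B e \in P -> e \in spanned ends P.
Proof. by rewrite /near_end /far_end inE; case: ifP => _ -> ->. Qed.

Definition joins (B : {set V}) (x : V) (e : E) : bool :=
  ((ends e).1 \in B) && ((ends e).2 == x) || ((ends e).2 \in B) && ((ends e).1 == x).

Lemma joins_far_end (B : {set V}) (x : V) (e : E) :
  x \notin B -> joins B x e -> far_end B e = x /\ near_end B e \in B.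
Proof.
rewrite /joins /far_end /near_end => xB /orP [|] /andP [eB /eqP ex].
  by rewrite eB.
by rewrite ex (negbTE xB).
Qed.

(* Encodes "[T] contains a tree of depth at most [r] rooted at [v] with vertex
   set [B]" by the only property used: each [X] in [B] lies in the union [P] of
   the tree paths from [v] to [X], which spans [#|P| - 1] tree edges. *)
Definition tree_cover (v : V) (B : {set V}) (T : {set E}) (r : nat) : Prop :=
  forall X : {set V}, X \subset B -> exists (P : {set V}) (Fp : {set E}),
    [/\ X \subset P, P \subset B, v \in P, #|P| <= 1 + r * #|X| &
     [/\ Fp \subset T, Fp \subset spanned ends P & #|P| <= #|Fp| + 1]].

Section Density.
Variable F : {set E}.

Definition incident (u : V) : {set E} :=
  [set e in F | ((ends e).1 == u) || ((ends e).2 == u)].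

Definition nbhd (B : {set V}) : {set V} := B :|: [set x | [exists e in F, joins B x e]].

Lemma subset_nbhd (B : {set V}) : B \subset nbhd B.
Proof. exact: subsetUl. Qed.

Lemma nbhd_doubling [B : {set V}] :
  {in B, forall u, 3 <= #|incident u|} ->
  #|F :&: spanned ends B| <= #|B| -> #|F :&: spanned ends (nbhd B)| <= #|nbhd B| ->
  2 * #|B| <= #|nbhd B|.
Proof.
move=> deg3 sparseB sparseNB.
pose F1 := [set e in F | (ends e).1 \in B]; pose F2 := [set e in F | (ends e).2 \in B].
have deg_sum : 3 * #|B| <= #|F1| + #|F2|.
  rewrite -!sum_card_fibers -big_split /= mulnC -sum_nat_const.
  apply: leq_sum => u uB; apply: leq_trans (deg3 u uB) _.
  have -> : incident u = [set e in F | (ends e).1 == u] :|: [set e in F | (ends e).2 == u].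
    by apply/setP => e; rewrite !inE andb_orr.
  exact: leq_card_setU.
have F12_sp : F1 :&: F2 = F :&: spanned ends B.
  by apply/setP => e; rewrite !inE; case: (e \in F).
have F12_nbhd : F1 :|: F2 \subset F :&: spanned ends (nbhd B).
  apply/subsetP => e; rewrite !inE => /orP [] /andP [eF eB]; rewrite eF eB ?andbT /=;
    apply/orP; right; apply/existsP; exists e; by rewrite eF /joins eB !eqxx ?orbT.
have := cardsUI F1 F2; rewrite F12_sp; have := subset_leq_card F12_nbhd; lia.
Qed.

Section ParentEdge.
Variables (B : {set V}) (e0 : E).

(* [e0] is a default only: on [nbhd B :\: B] the pick succeeds. *)
Definition parent_edge (x : V) : E := odflt e0 [pick e in F | joins B x e].

Definition grow_tree (T : {set E}) : {set E} := T :|: parent_edge @: (nbhd B :\: B).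

Lemma parent_edgeP [x] : x \in nbhd B :\: B ->
  [/\ parent_edge x \in F, far_end B (parent_edge x) = x & near_end B (parent_edge x) \in B].
Proof.
rewrite !inE => /andP [xB /orP [//|/existsP [e /andP [eF eBx]]]]; first by rewrite (negbTE xB).
rewrite /parent_edge; case: pickP => [e' /andP [e'F e'Bx]|/(_ e)]; last by rewrite eF eBx.
by have [-> ?] := @joins_far_end B x e' xB e'Bx.
Qed.

Lemma parent_edge_inj : {in nbhd B :\: B &, injective parent_edge}.
Proof.
move=> x y /parent_edgeP [_ fx _] /parent_edgeP [_ fy _] exy.
by rewrite -fx -fy exy.
Qed.

Lemma parent_edge_notin_spanned [x] : x \in nbhd B :\: B -> parent_edge x \notin spanned ends B.
Proof.
move=> xN; have [_ far_x _] := parent_edgeP xN.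
have : x \notin B by move: xN; rewrite inE => /andP [].
by rewrite -{1}far_x /far_end inE; case: ifP => [_ /negbTE ->|->].
Qed.

Lemma grow_tree_sub [T : {set E}] :
  T \subset F :&: spanned ends B -> grow_tree T \subset F :&: spanned ends (nbhd B).
Proof.
move=> sTB; rewrite subUset (subset_trans sTB) ?setIS ?spannedS ?subset_nbhd //=.
apply/subsetP => _ /imsetP [x xN ->]; have [eF far_x near_x] := parent_edgeP xN.
rewrite inE eF; apply: spanned_near_far; first exact: subsetP (subset_nbhd B) _ near_x.
by rewrite far_x; move: xN; rewrite inE => /andP [].
Qed.

Lemma card_grow_tree [T : {set E}] : #|T| < #|B| -> #|grow_tree T| < #|nbhd B|.
Proof.
move=> ltTB; have := cardsID B (nbhd B); rewrite (setIidPr (subset_nbhd B)).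
have := (leq_card_setU T (parent_edge @: (nbhd B :\: B))).1.
have := leq_imset_card parent_edge (nbhd B :\: B); rewrite /grow_tree; lia.
Qed.

Lemma tree_cover_grow [v : V] [r : nat] [T : {set E}] :
  T \subset spanned ends B -> tree_cover v B T r ->
  tree_cover v (nbhd B) (grow_tree T) r.+1.
Proof.
move=> sTB coverB X sXN.
pose pa x := near_end B (parent_edge x).
set Xo := X :\: B; set X' := X :&: B :|: pa @: Xo.
have sXoN : Xo \subset nbhd B :\: B by rewrite setSD.
have sX'B : X' \subset B.
  rewrite subUset subsetIr /=; apply/subsetP => _ /imsetP [x xXo ->].
  by have [] := parent_edgeP (subsetP sXoN x xXo).
have [P [Fp [sX'P sPB vP cardP [sFpT sFpP cardPFp]]]] := coverB X' sX'B.
have disj_Fp : Fp :&: parent_edge @: Xo = set0.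
  apply/setP => e; rewrite !inE; apply/negP => /andP [eFp /imsetP [x xXo ex]].
  have := parent_edge_notin_spanned (subsetP sXoN x xXo).
  by rewrite -ex (subsetP sTB) ?(subsetP sFpT).
have card_par : #|parent_edge @: Xo| = #|Xo|.
  by apply: card_in_imset => x y xXo yXo; apply: parent_edge_inj; apply: (subsetP sXoN).
exists (P :|: Xo), (Fp :|: parent_edge @: Xo); split.
- apply/subsetP => x xX; rewrite inE; case xB: (x \in B); last by rewrite !inE xB xX orbT.
  by rewrite (subsetP sX'P) // !inE xX xB.
- by rewrite subUset (subset_trans sPB (subset_nbhd B)) (subset_trans _ sXN) ?subsetDl.
- by rewrite inE vP.
- have : #|X'| <= #|X :&: B| + #|Xo|.
    by apply: leq_trans (leq_card_setU _ _).1 _; rewrite leq_add2l leq_imset_card.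
  have := (leq_card_setU P Xo).1; have := cardsID B X; rewrite -/Xo => cardX cardPXo cardX'.
  have : r * #|X'| <= r * #|X| by rewrite leq_mul2l -cardX cardX' orbT.
  rewrite mulSn; lia.
split.
- rewrite subUset (subset_trans sFpT (subsetUl _ _)) /grow_tree.
  by apply: subset_trans (subsetUr _ _); apply: imsetS.
- rewrite subUset (subset_trans sFpP (spannedS (subsetUl _ _))) /=.
  apply/subsetP => _ /imsetP [x xXo ->]; have [_ far_x near_x] := parent_edgeP (subsetP sXoN x xXo).
  apply: (@spanned_near_far B); last by rewrite far_x inE xXo orbT.
  by rewrite inE (subsetP sX'P) // inE; apply/orP; right; apply: imset_f.
- have := cardsUI Fp (parent_edge @: Xo); rewrite disj_Fp cards0 card_par.
  have := (leq_card_setU P Xo).1; lia.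
Qed.

End ParentEdge.

(* Two edges of [B] outside the tree have at most four endpoints; the subtree
   through them spans its own tree edges plus these two. *)
Lemma tree_cover_dense [v : V] [B : {set V}] [T : {set E}] [r : nat] :
  T \subset F :&: spanned ends B -> #|T| < #|B| -> tree_cover v B T r ->
  #|B| < #|F :&: spanned ends B| ->
  exists C : {set V}, [/\ C \subset B, #|C| <= 1 + r * 4 & #|C| < #|F :&: spanned ends C|].
Proof.
move=> sTB ltTB coverB denseB.
have /card_gt1P [e1 [e2 [e1R e2R ne12]]] : 1 < #|(F :&: spanned ends B) :\: T|.
  by rewrite cardsD; have := subset_leq_card (subsetIr (F :&: spanned ends B) T); lia.
move: e1R e2R; rewrite !inE => /and3P [e1T e1F /andP [a1 b1]] /and3P [e2T e2F /andP [a2 b2]].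
set X := [set x in [:: (ends e1).1; (ends e1).2; (ends e2).1; (ends e2).2]].
have sXB : X \subset B by apply/subsetP => x; rewrite !inE => /or4P [] /eqP ->.
have cardX : #|X| <= 4 by rewrite /X cardsE; exact: card_size.
have [P [Fp [sXP sPB _ cardP [sFpT sFpP cardPFp]]]] := coverB X sXB.
exists P; split => //; first by apply: leq_trans cardP _; rewrite leq_add2l leq_mul.
have sE12 : [set e1; e2] \subset F :&: spanned ends P.
  apply/subsetP => e; rewrite !inE => /orP [] /eqP ->;
    by rewrite ?e1F ?e2F !(subsetP sXP) // !inE eqxx ?orbT.
have sFpF : Fp \subset F by apply: subset_trans sFpT (subset_trans sTB (subsetIl _ _)).
have : #|Fp :|: [set e1; e2]| <= #|F :&: spanned ends P|.
  by apply: subset_leq_card; rewrite subUset sE12 andbT subsetI sFpF sFpP.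
have disj : Fp :&: [set e1; e2] = set0.
  apply/setP => e; rewrite !inE; apply/andP => -[eFp /orP [] /eqP ee]; subst e.
    by move: e1T; rewrite (subsetP sFpT).
  by move: e2T; rewrite (subsetP sFpT).
have := cardsUI Fp [set e1; e2]; rewrite disj cards0 cards2 ne12.
by move: cardPFp; clear; lia.
Qed.

Section Breadth.
Variable W : {set V}.
Hypothesis sFW : F \subset spanned ends W.

Lemma nbhd_subset [B : {set V}] : B \subset W -> nbhd B \subset W.
Proof.
move=> sBW; rewrite subUset sBW; apply/subsetP => x; rewrite inE.
case/existsP=> e /andP [eF /orP [] /andP [_ /eqP <-]];
  by have := subsetP sFW e eF; rewrite inE => /andP [].
Qed.

Lemma incident_spanned (u : V) : F :\: incident u \subset spanned ends (W :\ u).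
Proof.
apply/subsetP => e; rewrite inE => /andP []; rewrite inE => /nandP eu eF.
move: eu; rewrite eF negb_or => -[//|/andP [eu1 eu2]].
by have := subsetP sFW e eF; rewrite !inE eu1 eu2 => /andP [-> ->].
Qed.

(* Breadth-first search from [v]: the balls stay sparse, hence double at each
   step, until a dense one appears. *)
Lemma bfs_dichotomy (v : V) (e0 : E) :
  {in W, forall u, 3 <= #|incident u|} -> v \in W -> forall r,
  (exists (C : {set V}) (k : nat), [/\ C \subset W, #|C| <= 1 + k * 4,
      expn 2 k.-1 <= #|W| & #|C| < #|F :&: spanned ends C|]) \/
  (exists (B : {set V}) (T : {set E}), [/\ B \subset W, T \subset F :&: spanned ends B,
      #|T| < #|B|, tree_cover v B T r &
      expn 2 r <= #|B| /\ #|F :&: spanned ends B| <= #|B|]).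
Proof.
move=> deg3 vW; elim=> [|r IHr].
  have sv : [set v] \subset W by rewrite sub1set.
  case: (ltnP 1 #|F :&: spanned ends [set v]|) => [dense_v|sparse_v].
    by left; exists [set v], 0; rewrite cards1 expn0 card_gt0; split=> //; apply/set0Pn; exists v.
  right; exists [set v], set0; rewrite cards0 cards1 sub0set; split=> //.
  move=> X sXv; exists [set v], set0.
  by rewrite cards0 cards1 set11; split; rewrite ?sub0set.
case: IHr => [|[B [T [sBW sTB ltTB coverB [le_2r_B sparseB]]]]]; first by left.
have sTB' : T \subset spanned ends B by apply: subset_trans sTB (subsetIr _ _).
have coverNB := tree_cover_grow B e0 sTB' coverB.
have sTNB := grow_tree_sub B e0 sTB; have ltTNB := card_grow_tree B e0 ltTB.
have sNW := nbhd_subset sBW.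
case: (ltnP #|nbhd B| #|F :&: spanned ends (nbhd B)|) => [denseNB|sparseNB].
  have [C [sCN cardC denseC]] := tree_cover_dense sTNB ltTNB coverNB denseNB.
  left; exists C, r.+1; split=> //; first exact: subset_trans sCN sNW.
  exact: leq_trans le_2r_B (subset_leq_card sBW).
right; exists (nbhd B), (grow_tree B e0 T); split=> //; split=> //.
have deg3B : {in B, forall u, 3 <= #|incident u|} by move=> u /(subsetP sBW); apply: deg3.
by rewrite expnS; apply: leq_trans (nbhd_doubling deg3B sparseB sparseNB); rewrite leq_mul2l le_2r_B.
Qed.

Lemma min_degree3_dense :
  {in W, forall u, 3 <= #|incident u|} -> 0 < #|W| ->
  exists (C : {set V}) (k : nat), [/\ C \subset W, #|C| <= 1 + k * 4,
      expn 2 k.-1 <= #|W| & #|C| < #|F :&: spanned ends C|].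
Proof.
move=> deg3 /card_gt0P [v vW].
have /card_gt0P [e0 _] : 0 < #|incident v| by apply: leq_trans (deg3 v vW).
have [//|[B [_ [sBW _ _ _ [le_2W_B _]]]]] := bfs_dichotomy v e0 deg3 vW #|W|.
by have := ltn_expl #|W| (isT : 1 < 2); have := subset_leq_card sBW; lia.
Qed.

End Breadth.

End Density.

Lemma dense_subgraph_one (W : {set V}) (F : {set E}) :
  F \subset spanned ends W -> 2 <= #|W| -> 2 * #|W| + 2 <= #|F| ->
  exists C : {set V}, [/\ C \subset W, (INR #|C| <= 8 * log2 (INR #|W|))%R
                      & #|C| < #|F :&: spanned ends C|].
Proof.
have [n] := ubnP #|W|; elim: n W F => // n IHn W F ltWn sFW ge2W denseF.
have log2W_ge1 := log2_ge1 ge2W.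
have [small|large] := leqP #|W| 8.
  exists W; rewrite (setIidPl sFW); split=> //; last by lia.
  by have /le_INR := leP small; rewrite [INR 8]/=; lra.
have [/existsP [u /andP [uW deg_u]]|/existsPn deg3] := boolP [exists u in W, #|incident F u| <= 2].
  have cardWu := cardsD1 u W; rewrite uW /= in cardWu.
  have := cardsD F (incident F u); have := subset_leq_card (subsetIr F (incident F u)).
  move=> cardFu cardF'.
  have ltWun : #|W :\ u| < n by lia.
  have ge2Wu : 2 <= #|W :\ u| by lia.
  have denseFu : 2 * #|W :\ u| + 2 <= #|F :\: incident F u| by lia.
  have [C [sCW' sizeC denseC]] := IHn _ _ ltWun (@incident_spanned F W sFW u) ge2Wu denseFu.
  exists C; split.
  - exact: subset_trans sCW' (subsetDl _ _).
  - apply: Rle_trans sizeC _; apply: Rmult_le_compat_l; first lra.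
    by apply: log2_INR_le; lia.
  - by apply: leq_trans denseC (subset_leq_card (setSI _ (subsetDl _ _))).
have {}deg3 : {in W, forall u, 3 <= #|incident F u|}.
  by move=> u uW; have := deg3 u; rewrite uW /= -ltnNge.
have [C [k [sCW cardC le_2k_W denseC]]] := @min_degree3_dense F W sFW deg3 (ltnW ge2W).
exists C; split=> //; apply: bfs_bound_log2 cardC le_2k_W _; lia.
Qed.

End Spanned.

Section Contraction.
Variables (V E : finType) (ends : E -> V * V) (C : {set V}) (w : V).
Hypothesis wC : w \in C.

Definition contract (x : V) : V := if x \in C then w else x.
Definition contract_ends (e : E) : V * V := (contract (ends e).1, contract (ends e).2).

Lemma contract_spanned (W : {set V}) (F : {set E}) :
  F \subset spanned ends W -> F \subset spanned contract_ends (W :\: C :|: [set w]).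
Proof.
have contractW x : x \in W -> contract x \in W :\: C :|: [set w].
  by rewrite /contract !inE; case: ifP => [_ _|-> ->]; rewrite ?eqxx ?orbT.
move/subsetP=> sFW; apply/subsetP => e /sFW; rewrite inE => /andP [e1 e2].
by rewrite inE !contractW.
Qed.

Lemma card_contract (W : {set V}) :
  C \subset W -> #|W :\: C :|: [set w]| + #|C| = #|W| + 1.
Proof.
move=> sCW; rewrite setUC cardsU1 !inE wC /= -addnA addnC (cardsD W C) (setIidPr sCW).
by rewrite subnK ?subset_leq_card // addnC.
Qed.

Lemma uncontract_subset (W S' : {set V}) :
  C \subset W -> S' \subset W :\: C :|: [set w] -> S' :\ w :|: C \subset W.
Proof.
move=> sCW /subsetP sS'W; rewrite subUset sCW andbT; apply/subsetP => x.
by rewrite !inE => /andP [xw /sS'W]; rewrite !inE (negbTE xw) orbF => /andP [].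
Qed.

Lemma spanned_uncontract (S' : {set V}) :
  spanned contract_ends S' \subset spanned ends (S' :\ w :|: C).
Proof.
have uncontract x : contract x \in S' -> x \in S' :\ w :|: C.
  rewrite /contract !inE; case: ifP => xC; rewrite ?orbT // => xS'.
  by rewrite xS' andbT orbF; apply: contraFN xC => /eqP ->.
apply/subsetP => e; rewrite inE => /andP [/uncontract e1 /uncontract e2].
by rewrite inE e1 e2.
Qed.

(* A dense part [C] contracted to [w], with [#|C|] of its edges [D] deleted:
   lifting adds [#|C| - 1] or [#|C|] vertices and at least [#|C|] or
   [#|C| + 1] edges, according as [S'] contains [w] or not. *)
Lemma lift_contracted (F D : {set E}) (S' : {set V}) (k : nat) :
  D \subset F :&: spanned ends C -> #|D| = #|C| -> #|C| < #|F :&: spanned ends C| ->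
  #|S'| + k <= #|(F :\: D) :&: spanned contract_ends S'| ->
  #|S' :\ w :|: C| + k.+1 <= #|F :&: spanned ends (S' :\ w :|: C)|.
Proof.
move=> sD cardD denseC denseS'.
set S := S' :\ w :|: C; set A := (F :\: D) :&: spanned contract_ends S'.
rewrite -/A in denseS'.
have sCS : F :&: spanned ends C \subset F :&: spanned ends S by rewrite setIS ?spannedS ?subsetUr.
have add_disjoint (X : {set E}) :
    A :&: X = set0 -> X \subset F :&: spanned ends S -> #|A| + #|X| <= #|F :&: spanned ends S|.
  move=> disjAX sXS; rewrite -cardsUI disjAX cards0 addn0 subset_leq_card // subUset sXS andbT.
  by rewrite setISS ?subsetDl ?spanned_uncontract.
have := (leq_card_setU (S' :\ w) C).1; rewrite -/S => cardS.
have [wS'|wS'] := boolP (w \in S').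
  have disjAD : A :&: D = set0.
    by apply/setP => e; rewrite !inE; case: (e \in D); rewrite ?andbF.
  have := add_disjoint D disjAD (subset_trans sD sCS).
  by have := cardsD1 w S'; rewrite wS' /=; lia.
have disjAC : A :&: (F :&: spanned ends C) = set0.
  apply/setP => e; rewrite !inE; apply/negbTE/and4P => -[/and3P [_ c1 _] _ e1C _].
  by move: c1; rewrite /= /contract e1C (negbTE wS').
have := add_disjoint _ disjAC sCS; have := subset_leq_card (subD1set S' w); lia.
Qed.

End Contraction.

Arguments contract_spanned {V E ends C w W F}.
Arguments card_contract {V C w} wC {W}.
Arguments uncontract_subset {V C w W S'}.
Arguments lift_contracted {V E ends C w} wC {F D S' k}.

Lemma dense_subgraph (V E : finType) (g : nat) (ends : E -> V * V) (W : {set V}) (F : {set E}) :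
  F \subset spanned ends W -> 2 <= #|W| -> 2 * #|W| + g.+1 + 1 <= #|F| ->
  exists S : {set V}, [/\ S \subset W, (INR #|S| <= INR (8 * g.+1) * log2 (INR #|W|))%R
                      & #|S| + g.+1 <= #|F :&: spanned ends S|].
Proof.
have INR8 : INR 8 = 8%R by rewrite /=; lra.
elim: g ends W F => [|g IHg] ends W F sFW ge2W denseF;
  have [C [sCW sizeC denseC]] := @dense_subgraph_one V E ends W F sFW ge2W ltac:(lia).
  by exists C; rewrite muln1 INR8 addn1.
have log2W_ge0 : (0 <= log2 (INR #|W|))%R by have := log2_ge1 ge2W; lra.
have INR_8g : INR (8 * g.+2) = (8 + INR (8 * g.+1))%R by rewrite mulnS plus_INR INR8.
have INR_8g_ge0 := pos_INR (8 * g.+1).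
have [sWC|/subsetPn [x xW xC]] := boolP (W \subset C).
  exists W; rewrite (setIidPl sFW); split=> //; last by lia.
  have /le_INR := leP (subset_leq_card sWC); rewrite INR_8g; nra.
have /card_gt0P [e] : 0 < #|F :&: spanned ends C| by lia.
rewrite !inE => /and3P [_ wC _]; set w := (ends e).1 in wC.
have [D sD cardD] := exists_subset_card (ltnW denseC).
have sDF : D \subset F by apply: subset_trans sD (subsetIl _ _).
have C_gt0 : 0 < #|C| by apply/card_gt0P; exists w.
have ltCW : #|C| < #|W| by apply/proper_card/properP; split=> //; exists x.
set W' := W :\: C :|: [set w].
have cardW' : #|W'| + #|C| = #|W| + 1 := card_contract wC sCW.
have cardF' : #|F :\: D| = #|F| - #|C| by rewrite cardsD (setIidPr sDF) cardD.
have sF'W' : F :\: D \subset spanned (contract_ends _ _ ends C w) W'.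
  exact: subset_trans (subsetDl _ _) (contract_spanned sFW).
have [S' [sS'W' sizeS' denseS']] := IHg _ _ _ sF'W' ltac:(lia) ltac:(lia).
exists (S' :\ w :|: C); split.
- exact: uncontract_subset.
- have /le_INR := leP (leq_trans (leq_card_setU (S' :\ w) C).1
                         (leq_add (subset_leq_card (subD1set S' w)) (leqnn _))).
  have : (log2 (INR #|W'|) <= log2 (INR #|W|))%R by apply: log2_INR_le; lia.
  rewrite plus_INR INR_8g; nra.
- exact: (lift_contracted wC sD cardD denseC denseS').
Qed.

Theorem lemma3p2 (V E : finType) (ends : E -> V * V) (g : nat) :
  2 <= #|V| -> 1 <= g -> 2 * #|V| + g + 1 <= #|E| ->
  exists S : {set V},
    (INR #|S| <= INR (8 * g) * log2 (INR #|V|))%R /\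
    #|S| + g <= #|spanned ends S|.
Proof.
case: g => // g ge2V _ denseE.
have [|||S [_ sizeS denseS]] := @dense_subgraph V E g ends [set: V] [set: E].
- by apply/subsetP => e _; rewrite !inE.
- by rewrite cardsT.
- by rewrite !cardsT.
by exists S; rewrite cardsT setTI in sizeS denseS.
Qed.
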